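(* Let $m,k\in\mathbb{N}$ and let $\alpha\in\mathbb{C}$ with $\alpha,1-\alpha\notin\mathbb{Z}_0^-$. Then \[ {}_3F_2\left[\begin{array}{r} -m,\ \alpha,\ 1-\alpha;\\ -2m-k,\ 1+k;\end{array}1\right]_m=\frac{\left(\frac{2-\alpha+k}{2}\right)_{m} \left(\frac{1+\alpha+k}{2}\right)_{m}}{\left(\frac{2+k}{2}\right)_{m} \left(\frac{1+k}{2}\right)_{m}}. \]
   Context: $\mathbb{N}=\{1,2,3,\dots\}$, $\mathbb{Z}_0^-=\{0,-1,-2,\dots\}$. For $a\in\mathbb{C}$ and $n\in\mathbb{N}_0$, $(a)_0=1$ and $(a)_n=a(a+1)\cdots(a+n-1)$. For $N\in\mathbb{N}_0$, ${}_3F_2\left[\begin{array}{r} a_1,a_2,a_3;\\ b_1,b_2;\end{array}z\right]_N=\sum_{n=0}^{N}\frac{(a_1)_n(a_2)_n(a_3)_n}{(b_1)_n(b_2)_n}\frac{z^n}{n!}$ (the sum of the first $N+1$ terms), defined whenever $(b_1)_n(b_2)_n\neq0$ for $0\le n\le N$. *)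

From HB Require Import structures.
From mathcomp Require Import all_boot all_order all_algebra.
From mathcomp Require Import complex.
From mathcomp Require Import reals.
Set Implicit Arguments. Unset Strict Implicit. Unset Printing Implicit Defensive.
Import Order.TTheory GRing.Theory Num.Theory.
Local Open Scope ring_scope.

Definition poch {F : pzRingType} (a : F) (n : nat) : F :=
  \prod_(i < n) (a + i%:R).

(* Truncated 3F2: sum of the first N+1 terms. Division is field division;
   the theorem is only applied where the denominators are nonzero. *)
Definition F32_trunc {F : fieldType} (a1 a2 a3 b1 b2 z : F) (N : nat) : F :=
  \sum_(n < N.+1)
     (poch a1 n * poch a2 n * poch a3 n) / (poch b1 n * poch b2 n)
     * z ^+ n / (n`!)%:R.

Definition in_Z0minus {F : pzRingType} (x : F) : Prop :=
  exists j : nat, x = - (j%:R).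

From mathcomp Require Import all_boot all_algebra.
From mathcomp Require Import complex reals.
From mathcomp Require Import ring zify.

(* Put x = a (1 - a).  As (a)_n (1 - a)_n = Q_n(x) := prod_(i < n) (x + i (i + 1))
   ([poch_quad]), the truncated 3F2 is the polynomial sum_(n <= m) c_m(n) Q_n(x)
   ([F32_coef]) of degree m in x.  As
   ((2 - a + k)/2 + j) ((1 + a + k)/2 + j) = (x + A_j) / 4
   with A_j = (k + 2j + 1)(k + 2j + 2) ([zero_shift]), the right-hand side is
   prod_(j < m) (x + A_j) / A_j.  The two sides agree by induction on m: the
   contiguity relation c_(m+1)(n+1) A_m = c_m(n) + (A_m - (n+1)(n+2)) c_m(n+1),
   together with Q_(n+1)(x) = Q_n(x) (x + n(n+1)), turns A_m times the (m+1)-st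
   sum into (x + A_m) times the m-th. *)

Set Implicit Arguments.
Unset Strict Implicit.
Unset Printing Implicit Defensive.

Import GRing.Theory Num.Theory.
Local Open Scope ring_scope.

Section Pochhammer.
Variable R : pzRingType.
Implicit Types (a x : R) (n : nat).

Lemma poch0 a : poch a 0 = 1.
Proof. by rewrite /poch big_ord0. Qed.

Lemma pochS a n : poch a n.+1 = poch a n * (a + n%:R).
Proof. by rewrite /poch big_ord_recr. Qed.

Lemma pochSl a n : poch a n.+1 = a * poch (a + 1) n.
Proof.
rewrite /poch big_ord_recl addr0; congr (_ * _); apply: eq_bigr => i _.
by rewrite -addrA [1 + _]addrC natr1.
Qed.

Lemma pochSSl a n : poch a n.+2 = a * (a + 1) * poch (a + 2) n.
Proof. by rewrite pochSl pochSl -addrA -mulrA. Qed.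

Definition poch_quad x n : R := \prod_(i < n) (x + (i * i.+1)%:R).

Lemma poch_quad0 x : poch_quad x 0 = 1.
Proof. by rewrite /poch_quad big_ord0. Qed.

Lemma poch_quadS x n : poch_quad x n.+1 = poch_quad x n * (x + (n * n.+1)%:R).
Proof. by rewrite /poch_quad big_ord_recr. Qed.

End Pochhammer.

Lemma poch_quad_poch (R : comPzRingType) (a : R) n :
  poch a n * poch (1 - a) n = poch_quad (a * (1 - a)) n.
Proof.
elim: n => [|n IH]; first by rewrite !poch0 poch_quad0 mulr1.
by rewrite !pochS poch_quadS -IH natrM -!natr1; ring.
Qed.

Section CharZero.
Variable F : fieldType.
Hypothesis F0 : has_pchar0 F.
Implicit Types (a x : F) (m n : nat).

Lemma natf_eq0 n : (n%:R == 0 :> F) = (n == 0)%N.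
Proof. exact: (pcharf0P F).1 F0 n. Qed.

Lemma natf_subr_neq0 i j : (i < j)%N -> i%:R - j%:R != 0 :> F.
Proof.
by move=> ij; rewrite -opprB -natrB ?(ltnW ij) // oppr_eq0 natf_eq0 subn_eq0 -ltnNge.
Qed.

Variable k : nat.

Definition F32_coef m n : F :=
  poch (- m%:R) n / (poch (- (2 * m + k)%N%:R) n * poch (1 + k%:R) n * n`!%:R).

Definition zero_shift j : F := ((k + 2 * j).+1 * (k + 2 * j).+2)%:R.

Lemma F32_coef0 m : F32_coef m 0 = 1.
Proof. by rewrite /F32_coef !poch0 !mul1r invr1. Qed.

Lemma F32_coef_last m : F32_coef m m.+1 = 0.
Proof. by rewrite /F32_coef pochS addNr !mulr0 mul0r. Qed.

Lemma F32_coefS m n : F32_coef m n.+1 = F32_coef m n * (- m%:R + n%:R)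
  / ((- (2 * m + k)%N%:R + n%:R) * (1 + k%:R + n%:R) * n.+1%:R).
Proof. by rewrite /F32_coef !pochS factS natrM !invfM; ring. Qed.

Lemma zero_shift_neq0 j : zero_shift j != 0.
Proof. by rewrite /zero_shift natf_eq0. Qed.

Lemma F32_coefSS m n : (n <= 2 * m + k)%N ->
  F32_coef m.+1 n.+1 = F32_coef m n * (- m.+1%:R) * (- (2 * m + k).+1%:R + n%:R)
                    / (zero_shift m * (1 + k%:R + n%:R) * n.+1%:R).
Proof.
move=> le_n; set a : F := - (2 * m.+1 + k)%N%:R.
have pochSa : poch a n.+1 * (- (2 * m + k).+1%:R + n%:R)
              = zero_shift m * poch (- (2 * m + k)%N%:R) n.
  have -> : - (2 * m + k).+1%:R + n%:R = a + n.+1%:R.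
    by rewrite /a !mul2n -!addnn !natrD -!natr1; ring.
  rewrite -pochS pochSSl; congr (_ * poch _ _).
    by rewrite /a /zero_shift natrM !mul2n -!addnn !natrD -!natr1; ring.
  by rewrite /a !mul2n -!addnn !natrD -!natr1; ring.
have d_neq0 : - (2 * m + k).+1%:R + n%:R != 0 :> F by rewrite addrC natf_subr_neq0.
rewrite /F32_coef -/a -[poch a n.+1](mulfK d_neq0) pochSa.
rewrite (pochSl (- _)) -natr1 opprD addrNK (pochS (1 + _)) factS natrM.
by rewrite !invfM invrK; ring.
Qed.

Lemma F32_coef_rec m n : (n <= m)%N ->
  F32_coef m.+1 n.+1 * zero_shift m
  = F32_coef m n + (zero_shift m - (n.+1 * n.+2)%:R) * F32_coef m n.+1.
Proof.
move=> le_nm; rewrite F32_coefSS; last by lia.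
have [lt_nm | ->] : (n < m)%N \/ n = m by lia.
  rewrite F32_coefS /zero_shift; field.
  rewrite -!natrM -!natrD !nat1r -!natrD !natf_eq0 addrC natf_subr_neq0 //; lia.
rewrite F32_coef_last mulr0 addr0 /zero_shift; field.
by rewrite -!natrM -!natrD !nat1r -!natrD !natf_eq0.
Qed.

Lemma sum_F32_coef_poch_quadS x m :
  (\sum_(n < m.+2) F32_coef m.+1 n * poch_quad x n) * zero_shift m
  = (\sum_(n < m.+1) F32_coef m n * poch_quad x n) * (x + zero_shift m).
Proof.
pose g n := (zero_shift m - (n * n.+1)%:R) * F32_coef m n * poch_quad x n.
have shift_g : zero_shift m + \sum_(n < m.+1) g n.+1 = \sum_(n < m.+1) g n.
  have g0 : g 0%N = zero_shift m by rewrite /g F32_coef0 poch_quad0 subr0 !mulr1.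
  have g_last : g m.+1 = 0 by rewrite /g F32_coef_last mulr0 mul0r.
  by rewrite -g0 -(big_ord_recl _ g) big_ord_recr /= g_last addr0.
rewrite mulr_suml big_ord_recl F32_coef0 poch_quad0 !mul1r.
rewrite (eq_bigr (fun n : 'I_m.+1 => F32_coef m n * poch_quad x n.+1 + g n.+1)).
  rewrite big_split addrCA shift_g mulr_suml -big_split; apply: eq_bigr => n _.
  by rewrite /g poch_quadS /=; ring.
move=> n _; rewrite lift0 mulrAC F32_coef_rec; last exact: ltn_ord n.
by rewrite /g /=; ring.
Qed.

Lemma sum_F32_coef_poch_quad x m :
  \sum_(n < m.+1) F32_coef m n * poch_quad x n
  = \prod_(j < m) ((x + zero_shift j) / zero_shift j).
Proof.
elim: m => [|m IH]; first by rewrite big_ord1 big_ord0 F32_coef0 poch_quad0 mulr1.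
by rewrite [RHS]big_ord_recr /= -IH mulrA -sum_F32_coef_poch_quadS mulfK ?zero_shift_neq0.
Qed.

Lemma F32_trunc_poch_quad a m :
  F32_trunc (- m%:R) a (1 - a) (- (2 * m + k)%N%:R) (1 + k%:R) 1 m
  = \sum_(n < m.+1) F32_coef m n * poch_quad (a * (1 - a)) n.
Proof.
by apply: eq_bigr => n _; rewrite -poch_quad_poch expr1n mulr1 /F32_coef !invfM; ring.
Qed.

Lemma poch_half_pair a m :
  poch ((2 - a + k%:R) / 2) m * poch ((1 + a + k%:R) / 2) m
  = \prod_(j < m) ((a * (1 - a) + zero_shift j) / 4).
Proof.
rewrite /poch -big_split; apply: eq_bigr => j _ /=.
by rewrite /zero_shift; field; rewrite !natf_eq0.
Qed.

Lemma poch_half_ratio a m :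
  poch ((2 - a + k%:R) / 2) m * poch ((1 + a + k%:R) / 2) m
    / (poch ((2 + k%:R) / 2) m * poch ((1 + k%:R) / 2) m)
  = \prod_(j < m) ((a * (1 - a) + zero_shift j) / zero_shift j).
Proof.
have := poch_half_pair 0 m; rewrite subr0 addr0 mul0r => ->.
rewrite poch_half_pair -prodf_div; apply: eq_bigr => j _.
by rewrite add0r; field; rewrite -!natrM -!natrD !nat1r !natf_eq0.
Qed.

Theorem F32_trunc_closed_form a m :
  F32_trunc (- m%:R) a (1 - a) (- (2 * m + k)%N%:R) (1 + k%:R) 1 m
  = poch ((2 - a + k%:R) / 2) m * poch ((1 + a + k%:R) / 2) m
    / (poch ((2 + k%:R) / 2) m * poch ((1 + k%:R) / 2) m).
Proof.
by rewrite F32_trunc_poch_quad sum_F32_coef_poch_quad poch_half_ratio.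
Qed.

End CharZero.

Local Open Scope complex_scope.

Theorem mainTheorem5 (R : realType) (m k : nat) (alpha : R[i]) :
  (0 < m)%N -> (0 < k)%N ->
  ~ in_Z0minus alpha -> ~ in_Z0minus (1 - alpha) ->
  F32_trunc (- (m%:R)) alpha (1 - alpha)
            (- (2 * m + k)%N%:R) (1 + k%:R) 1 m
  = (poch ((2 - alpha + k%:R) / 2) m * poch ((1 + alpha + k%:R) / 2) m)
    / (poch ((2 + k%:R) / 2) m * poch ((1 + k%:R) / 2) m).
Proof.
by move=> _ _ _ _; apply: F32_trunc_closed_form; apply: pchar_num.
Qed.
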